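(* Let $(\mathbb{X},\mathbb{0},\mathbb{1},\oplus,\otimes)$ be a selective idempotent semifield with real powers (as described in the context). Let $M,N$ be positive integers, let $x_{1},\ldots,x_{M}$ and $y_{1},\ldots,y_{M}$ be nonzero elements of $\mathbb{X}$, and let $\bm{p}=(p_{1},\ldots,p_{N})^{T}\in\mathbb{R}^{N}$. Define $\bm{y}=(y_{1},\ldots,y_{M})^{T}$, the $M\times N$ matrix $\bm{X}(\bm{p})$ with entries $(\bm{X}(\bm{p}))_{ij}=x_{i}^{p_{j}}$, the scalar $$\Delta(\bm{p})=\bigl(\bm{X}(\bm{p})(\bm{y}^{-}\bm{X}(\bm{p}))^{-}\bigr)^{-}\bm{y},$$ and the functions of a real variable $p$ $$\varphi(p)=\bigoplus_{k=1}^{M}y_{k}^{-1}x_{k}^{p},\qquad \varphi_{i}(p)=y_{i}x_{i}^{-p}\varphi(p),\quad i=1,\ldots,M.$$ Then $$\Delta(\bm{p})=\bigoplus_{i=1}^{M}\min_{1\leq j\leq N}\varphi_{i}(p_{j})=\min_{(I_{1},\ldots,I_{N})}\bigoplus_{j=1}^{N}\bigoplus_{i\in I_{j}}\varphi_{i}(p_{j}),$$ where the last minimum is taken over all ordered partitions $(I_{1},\ldots,I_{N})$ of $\{1,\ldots,M\}$ into $N$ parts (empty parts allowed), and empty sums are interpreted as $\mathbb{0}$.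
   Context: A tropical (idempotent) semifield is a set $\mathbb{X}$ with operations $\oplus,\otimes$, zero $\mathbb{0}$ and identity $\mathbb{1}$ such that $(\mathbb{X},\mathbb{0},\oplus)$ is a commutative idempotent monoid ($x\oplus x=x$), $(\mathbb{X}\setminus\{\mathbb{0}\},\mathbb{1},\otimes)$ is an abelian group, and $\otimes$ distributes over $\oplus$; the product $x\otimes y$ is written $xy$ and $x^{-1}$ denotes the multiplicative inverse of $x\neq\mathbb{0}$. The semifield is assumed selective ($x\oplus y\in\{x,y\}$), so the order $x\leq y\iff x\oplus y=y$ is total; $\oplus$ is the maximum with respect to this order, and $\min$ denotes the corresponding minimum. Powers $x^{r}$ of nonzero $x$ are defined for all real exponents $r$ (iterated products for integers, unique roots for rationals, extended to reals), with $x^{0}=\mathbb{1}$. Matrix and vector operations are defined by the usual formulas with $\oplus,\otimes$ in place of $+,\times$: $(\bm{A}\bm{C})_{ij}=\bigoplus_{k}a_{ik}c_{kj}$. For a nonzero column vector $\bm{x}=(x_{i})$, its conjugate is the row vector $\bm{x}^{-}=(x_{i}^{-})$ with $x_{i}^{-}=x_{i}^{-1}$ if $x_{i}\neq\mathbb{0}$ and $x_{i}^{-}=\mathbb{0}$ otherwise; for a nonzero row vector the conjugate is the column vector defined analogously; for a nonzero scalar the conjugate is its inverse. *)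

From Stdlib Require Import Reals ClassicalEpsilon.
From mathcomp Require Import all_boot all_order all_algebra.

Set Implicit Arguments.
Unset Strict Implicit.
Unset Printing Implicit Defensive.

Record TSemifield := {
  carrier :> Type;
  zero : carrier;
  one : carrier;
  add : carrier -> carrier -> carrier;
  mul : carrier -> carrier -> carrier;
  inv : carrier -> carrier;            (* multiplicative inverse on nonzero elements *)
  pow : carrier -> Rdefinitions.R -> carrier; (* real powers of nonzero elements *)
  addA : forall a b c, add a (add b c) = add (add a b) c;
  addC : forall a b, add a b = add b a;
  add0 : forall a, add zero a = a;
  addid : forall a, add a a = a;
  add_sel : forall a b, add a b = a \/ add a b = b;
  mulA : forall a b c, mul a (mul b c) = mul (mul a b) c;
  mulC : forall a b, mul a b = mul b a;
  mul1 : forall a, mul one a = a;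
  mul0 : forall a, mul zero a = zero;
  mulDl : forall a b c, mul (add a b) c = add (mul a c) (mul b c);
  one_nz : one <> zero;
  mul_nz : forall a b, a <> zero -> b <> zero -> mul a b <> zero;
  inv_nz : forall a, a <> zero -> inv a <> zero;
  mulVx : forall a, a <> zero -> mul (inv a) a = one;
  pow_nz : forall a r, a <> zero -> pow a r <> zero;
  pow0 : forall a, a <> zero -> pow a R0 = one;
  pow1 : forall a, a <> zero -> pow a R1 = a;
  powD : forall a r s, a <> zero -> pow a (Rplus r s) = mul (pow a r) (pow a s);
  powM : forall a r s, a <> zero -> pow (pow a r) s = pow a (Rmult r s);
  powMl : forall a b r, a <> zero -> b <> zero ->
            pow (mul a b) r = mul (pow a r) (pow b r)
}.

Section Ops.
Variable S : TSemifield.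

Definition tle (a b : S) : Prop := add a b = b.
Definition tmin (a b : S) : S :=
  if excluded_middle_informative (add a b = b) then a else b.

(* minimum of a (nonempty) finite list; the empty list gives zero (unused) *)
Definition tbigmin (s : seq S) : S :=
  match s with [::] => zero S | a :: s' => foldr tmin a s' end.

Definition tsum (I : finType) (P : pred I) (F : I -> S) : S :=
  \big[@add S/zero S]_(i | P i) F i.

Definition cinv (a : S) : S :=
  if excluded_middle_informative (a = zero S) then zero S else inv a.

Definition tmulmx m n k (A : 'M[S]_(m, n)) (B : 'M[S]_(n, k)) : 'M[S]_(m, k) :=
  \matrix_(i, j) \big[@add S/zero S]_(l < n) mul (A i l) (B l j).

Definition tconj m n (A : 'M[S]_(m, n)) : 'M[S]_(n, m) :=
  \matrix_(i, j) cinv (A j i).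

Variables (M N : nat).

Definition Xmat (x : 'I_M -> S) (p : 'I_N -> Rdefinitions.R) : 'M[S]_(M, N) :=
  \matrix_(i, j) pow (x i) (p j).

Definition ycol (y : 'I_M -> S) : 'M[S]_(M, 1) := \matrix_(i, j) y i.

(* tDelta(p) = (X (y^- X)^-)^- y, a 1x1 matrix, read as a scalar *)
Definition tDelta (x y : 'I_M -> S) (p : 'I_N -> Rdefinitions.R) : S :=
  (tmulmx (tconj (tmulmx (Xmat x p) (tconj (tmulmx (tconj (ycol y)) (Xmat x p)))))
          (ycol y)) ord0 ord0.

Definition tphi (x y : 'I_M -> S) (r : Rdefinitions.R) : S :=
  tsum predT (fun k : 'I_M => mul (inv (y k)) (pow (x k) r)).

Definition tphi_i (x y : 'I_M -> S) (i : 'I_M) (r : Rdefinitions.R) : S :=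
  mul (mul (y i) (pow (x i) (Ropp r))) (tphi x y r).

Definition ordered_partition (I : {ffun 'I_N -> {set 'I_M}}) : bool :=
  [forall j, forall k, (j != k) ==> [disjoint I j & I k]] &&
  (\bigcup_(j < N) I j == [set: 'I_M]).

End Ops.

From Pilot Require Import Defs.
From Stdlib Require Import Reals ClassicalEpsilon.
From mathcomp Require Import all_boot all_order all_algebra.
From HB Require Import structures.
Import Defs.

Set Implicit Arguments.
Unset Strict Implicit.
Unset Printing Implicit Defensive.

(** Unfolding the matrix products, [Delta(p)] is the sum over [i] of
   [(\bigoplus_j x_i^(p_j) phi(p_j)^-1)^-1 y_i].  In a selective semifield a
   finite sum equals one of its terms, so the inverse of a sum is the minimum
   of the inverses; since [phi_i(p_j) = (x_i^(p_j) phi(p_j)^-1)^-1 y_i], this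
   gives the first identity.  For the second, any ordered partition puts each
   [i] in some part [I_j], so its sum dominates every [min_j phi_i(p_j)], and
   the partition sending each [i] to a minimising [j] attains the bound. *)

Section SelectiveSemifield.
Variable S : TSemifield.

Local Infix "⊕" := (@add S) (at level 50, left associativity).
Local Infix "⊗" := (@mul S) (at level 40, left associativity).

HB.instance Definition _ :=
  Monoid.isComLaw.Build S (zero S) (@add S) (@addA S) (@addC S) (@add0 S).

Lemma tle_refl (a : S) : tle a a.
Proof. exact: addid. Qed.

Lemma tle_trans (a b c : S) : tle a b -> tle b c -> tle a c.
Proof. by rewrite /tle => ab bc; rewrite -bc addA ab. Qed.

Lemma tle_anti (a b : S) : tle a b -> tle b a -> a = b.
Proof. by rewrite /tle => ab ba; rewrite -ab -{1}ba addC. Qed.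

Lemma tle_addr (a b : S) : tle a (a ⊕ b).
Proof. by rewrite /tle addA addid. Qed.

Lemma tle_lub (a b c : S) : tle a c -> tle b c -> tle (a ⊕ b) c.
Proof. by rewrite /tle => ac bc; rewrite -addA bc ac. Qed.

Lemma tle0x (a : S) : tle (zero S) a.
Proof. exact: add0. Qed.

Lemma tle_neq0 (a b : S) : tle a b -> a <> zero S -> b <> zero S.
Proof. by rewrite /tle => ab a0 b0; apply: a0; rewrite b0 addC add0 in ab. Qed.

Lemma tle_mul2r (a b c : S) : tle a b -> tle (a ⊗ c) (b ⊗ c).
Proof. by rewrite /tle => ab; rewrite -mulDl ab. Qed.

Lemma tsum_ub (I : finType) (P : pred I) (F : I -> S) i :
  P i -> tle (F i) (tsum P F).
Proof. by move=> Pi; rewrite /tsum (bigD1 i) //=; apply: tle_addr. Qed.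

Lemma tsum_lub (I : finType) (P : pred I) (F : I -> S) c :
  (forall i, P i -> tle (F i) c) -> tle (tsum P F) c.
Proof.
move=> Fc; apply: (big_ind (fun z => tle z c)) => [|a b|//].
  exact: tle0x.
exact: tle_lub.
Qed.

Lemma tsum_attained (I : finType) (P : pred I) (F : I -> S) i0 :
  P i0 -> exists2 i, P i & tsum P F = F i.
Proof.
move=> Pi0; have := tsum_ub F Pi0.
have [->|//] : tsum P F = zero S \/ exists2 i, P i & tsum P F = F i.
  apply: (big_ind (fun z => z = zero S \/ exists2 i, P i & z = F i)).
  - by left.
  - by move=> a b Ha Hb; case: (add_sel a b) => ->.
  - by move=> i Pi; right; exists i.
by move=> Fi0_le0; exists i0 => //; apply: tle_anti (tle0x _) Fi0_le0.
Qed.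

Lemma tsum_neq0 (I : finType) (P : pred I) (F : I -> S) i :
  P i -> F i <> zero S -> tsum P F <> zero S.
Proof. by move=> Pi; apply: tle_neq0 (tsum_ub F Pi). Qed.

Lemma mulV (a : S) : a <> zero S -> a ⊗ inv a = one S.
Proof. by move=> a0; rewrite mulC mulVx. Qed.

Lemma inv_uniq (a b : S) : a <> zero S -> a ⊗ b = one S -> b = inv a.
Proof. by move=> a0 ab; rewrite -(mul1 b) -(mulVx a0) -mulA ab mulC mul1. Qed.

Lemma invM (a b : S) :
  a <> zero S -> b <> zero S -> inv (a ⊗ b) = inv a ⊗ inv b.
Proof.
move=> a0 b0; symmetry; apply: inv_uniq; first exact: mul_nz.
by rewrite mulA -(mulA a) (mulC b) mulA mulV // mul1 mulV.
Qed.

Lemma invK (a : S) : a <> zero S -> inv (inv a) = a.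
Proof. by move=> a0; symmetry; apply: inv_uniq; [apply: inv_nz | apply: mulVx]. Qed.

Lemma powN (a : S) r : a <> zero S -> pow a (- r) = inv (pow a r).
Proof.
by move=> a0; apply: inv_uniq; [apply: pow_nz | rewrite -powD // Rplus_opp_r pow0].
Qed.

Lemma tle_inv (a b : S) :
  a <> zero S -> b <> zero S -> tle a b -> tle (inv b) (inv a).
Proof.
move=> a0 b0 /(tle_mul2r (inv a ⊗ inv b)).
by rewrite mulA mulV // mul1 (mulC (inv a)) mulA mulV // mul1.
Qed.

Lemma cinvE (a : S) : a <> zero S -> cinv a = inv a.
Proof. by rewrite /cinv; case: (excluded_middle_informative (a = zero S)). Qed.

Lemma tmin_lel (a b : S) : tle (tmin a b) a.
Proof.
rewrite /tmin; case: (excluded_middle_informative (a ⊕ b = b)) => ab.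
  exact: tle_refl.
by rewrite /tle addC; case: (add_sel a b).
Qed.

Lemma tmin_ler (a b : S) : tle (tmin a b) b.
Proof.
rewrite /tmin; case: (excluded_middle_informative (a ⊕ b = b)) => // ab.
exact: tle_refl.
Qed.

Lemma tmin_sel (a b : S) : tmin a b = a \/ tmin a b = b.
Proof.
by rewrite /tmin; case: (excluded_middle_informative (a ⊕ b = b)); [left | right].
Qed.

Section MinOfMap.
Variables (T : eqType) (f : T -> S).

Lemma foldr_tmin_map (a : T) (s : seq T) :
  (exists2 j, j \in a :: s & foldr (@tmin S) (f a) (map f s) = f j) /\
  (forall j, j \in a :: s -> tle (foldr (@tmin S) (f a) (map f s)) (f j)).
Proof.
elim: s => [|b s [[j js Ej] IHle]] /=.
  split; first by exists a; rewrite ?mem_head.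
  by move=> j; rewrite inE => /eqP ->; apply: tle_refl.
rewrite Ej in IHle *; split.
  case: (tmin_sel (f b) (f j)) => ->; first by exists b => //; rewrite !inE eqxx orbT.
  by exists j => //; move: js; rewrite !inE => /orP [->|->]; rewrite ?orbT.
move=> k; rewrite !inE => /or3P [/eqP -> | /eqP -> | ks].
- by apply: tle_trans (tmin_ler _ _) (IHle a (mem_head _ _)).
- exact: tmin_lel.
- by apply: tle_trans (tmin_ler _ _) (IHle k _); rewrite inE ks orbT.
Qed.

Lemma tbigmin_map_le (s : seq T) j : j \in s -> tle (tbigmin (map f s)) (f j).
Proof. by case: s => [//|a s]; apply: (foldr_tmin_map a s).2. Qed.

Lemma tbigmin_map_mem (s : seq T) :
  s != [::] -> exists2 j, j \in s & tbigmin (map f s) = f j.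
Proof. by case: s => [//|a s] _; apply: (foldr_tmin_map a s).1. Qed.

Lemma tbigmin_map_eq (s : seq T) j0 :
  j0 \in s -> (forall j, j \in s -> tle (f j0) (f j)) -> tbigmin (map f s) = f j0.
Proof.
move=> s_j0 min_j0; apply: tle_anti (tbigmin_map_le s_j0) _.
have [|j s_j ->] := @tbigmin_map_mem s; first by case: s s_j0 {min_j0}.
exact: min_j0.
Qed.

End MinOfMap.

Lemma tbigmin_inv_tsum (I : finType) (i0 : I) (a : I -> S) c :
  (forall i, a i <> zero S) ->
  tbigmin [seq inv (a i) ⊗ c | i <- enum I] = inv (tsum predT a) ⊗ c.
Proof.
move=> a_neq0; have [j0 _ sum_a] := tsum_attained a (i0 := i0) isT.
rewrite sum_a; apply: tbigmin_map_eq (mem_enum _ _) _ => j _.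
by apply/tle_mul2r/tle_inv => //; rewrite -sum_a; apply: tsum_ub.
Qed.

Section OrderedPartitions.
Variables (M N : nat) (F : 'I_M -> 'I_N -> S).

Definition fibers (g : 'I_M -> 'I_N) : {ffun 'I_N -> {set 'I_M}} :=
  [ffun j => [set i | g i == j]].

Lemma ordered_partition_fibers g : ordered_partition (fibers g).
Proof.
apply/andP; split.
  apply/forallP => j; apply/forallP => k; apply/implyP => neq_jk.
  rewrite disjoint_subset; apply/subsetP => i.
  by rewrite !ffunE !inE => /eqP ->.
by apply/eqP/setP => i; rewrite inE; apply/bigcupP; exists (g i); rewrite ?ffunE ?inE.
Qed.

Local Notation min_row i := (tbigmin [seq F i j | j <- enum 'I_N]).
Local Notation partition_sum Ip :=
  (tsum predT (fun j => tsum (fun i => i \in Ip j) (fun i => F i j))).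

Lemma tsum_tbigmin_le_partition_sum Ip :
  ordered_partition Ip -> tle (tsum predT (fun i => min_row i)) (partition_sum Ip).
Proof.
case/andP => _ /eqP cover_Ip; apply: tsum_lub => i _.
have /bigcupP [j _ Ip_ji] : i \in \bigcup_(j < N) Ip j by rewrite cover_Ip inE.
apply: tle_trans (tbigmin_map_le _ (mem_enum _ j)) _.
apply: tle_trans (@tsum_ub _ (fun i => i \in Ip j) (fun i => F i j) i Ip_ji) _.
exact: (tsum_ub (fun j => tsum (fun i => i \in Ip j) (fun i => F i j))).
Qed.

Lemma tsum_tbigmin_partitions (N_gt0 : (0 < N)%N) :
  tsum predT (fun i => min_row i) =
  tbigmin [seq partition_sum Ip
          | Ip : {ffun 'I_N -> {set 'I_M}} <- enum (@ordered_partition M N)].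
Proof.
have /fin_all_exists [g min_row_g] : forall i, exists j, min_row i = F i j.
  move=> i; have [|j _ ->] := tbigmin_map_mem (F i) (s := enum 'I_N); last by exists j.
  by rewrite -size_eq0 size_enum_ord -lt0n.
have sum_fibers_g : partition_sum (fibers g) = tsum predT (fun i => min_row i).
  apply: tle_anti _ (tsum_tbigmin_le_partition_sum (ordered_partition_fibers g)).
  apply: tsum_lub => j _; apply: tsum_lub => i; rewrite ffunE inE => /eqP <-.
  by rewrite -min_row_g; apply: (tsum_ub (fun i => min_row i)).
rewrite -sum_fibers_g (tbigmin_map_eq (j0 := fibers g)) //.
- by rewrite mem_enum; apply: ordered_partition_fibers.
- by move=> Ip; rewrite mem_enum sum_fibers_g; apply: tsum_tbigmin_le_partition_sum.
Qed.

End OrderedPartitions.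

Section Delta.
Variables (M N : nat) (M_gt0 : (0 < M)%N) (N_gt0 : (0 < N)%N) (x y : 'I_M -> S).
Hypotheses (x_neq0 : forall i, x i <> zero S) (y_neq0 : forall i, y i <> zero S).
Variable p : 'I_N -> R.

Lemma tphi_neq0 r : tphi x y r <> zero S.
Proof.
apply: (tsum_neq0 (i := Ordinal M_gt0)) => //.
by apply: mul_nz; [apply: inv_nz | apply: pow_nz].
Qed.

Local Notation weight i k := (pow (x i) (p k) ⊗ inv (tphi x y (p k))).

Lemma weight_neq0 i k : weight i k <> zero S.
Proof. by apply: mul_nz; [apply: pow_nz | apply: inv_nz; apply: tphi_neq0]. Qed.

Lemma tphi_iE i k : tphi_i x y i (p k) = inv (weight i k) ⊗ y i.
Proof.
have xp_neq0 : pow (x i) (p k) <> zero S by apply: pow_nz.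
have phi_neq0 := tphi_neq0 (r := p k).
have inv_phi_neq0 : inv (tphi x y (p k)) <> zero S by apply: inv_nz.
by rewrite /tphi_i powN // invM // invK // [RHS]mulC mulA.
Qed.

Lemma tDeltaE :
  tDelta x y p = tsum predT (fun i => inv (tsum predT (fun k => weight i k)) ⊗ y i).
Proof.
have row_phi k : tmulmx (tconj (ycol y)) (Xmat x p) ord0 k = tphi x y (p k).
  by rewrite /tmulmx mxE; apply: eq_bigr => i _; rewrite !mxE cinvE.
have col_weight i : tmulmx (Xmat x p) (tconj (tmulmx (tconj (ycol y)) (Xmat x p))) i ord0
    = tsum predT (fun k => weight i k).
  rewrite {1}/tmulmx mxE; apply: eq_bigr => k _.
  by rewrite [tconj _ _ _]mxE row_phi cinvE ?mxE //; apply: tphi_neq0.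
rewrite /tDelta {1}/tmulmx mxE; apply: eq_bigr => i _.
rewrite [tconj _ _ _]mxE col_weight cinvE ?mxE //.
by apply: (tsum_neq0 (i := Ordinal N_gt0)) => //; apply: weight_neq0.
Qed.

Lemma tDelta_tsum_tbigmin :
  tDelta x y p = tsum predT (fun i => tbigmin [seq tphi_i x y i (p j) | j <- enum 'I_N]).
Proof.
rewrite tDeltaE; apply: eq_bigr => i _.
rewrite -(tbigmin_inv_tsum (Ordinal N_gt0)); last exact: weight_neq0.
by congr tbigmin; apply: eq_map => k; rewrite tphi_iE.
Qed.

End Delta.

End SelectiveSemifield.

Theorem mainTheorem1 (S : TSemifield) (M N : nat)
  (hM : (0 < M)%N) (hN : (0 < N)%N)
  (x y : 'I_M -> S)
  (hx : forall i, x i <> zero S) (hy : forall i, y i <> zero S)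
  (p : 'I_N -> Rdefinitions.R) :
  tDelta x y p
    = tsum predT (fun i : 'I_M =>
        tbigmin [seq tphi_i x y i (p j) | j <- enum 'I_N])
  /\
  tsum predT (fun i : 'I_M =>
        tbigmin [seq tphi_i x y i (p j) | j <- enum 'I_N])
    = tbigmin [seq tsum predT (fun j : 'I_N =>
                      tsum (fun i => i \in Ip j) (fun i => tphi_i x y i (p j)))
              | Ip : {ffun 'I_N -> {set 'I_M}} <- enum (@ordered_partition M N)].
Proof.
split; first exact: tDelta_tsum_tbigmin.
exact: tsum_tbigmin_partitions.
Qed.
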